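(* Let $\Omega$ be a set and let $G=H\times K\leq{\rm Sym}(\Omega)$ be a finite transitive group which is the internal direct product of subgroups $H$ and $K$ with $\gcd(|H|,|K|)=1$. Let $\alpha\in\Omega$ (so $\Omega=\alpha^G$), $\Omega_1=\alpha^H$ and $\Omega_2=\alpha^K$. Then $G$ acts on $\Omega_1\times\Omega_2$ by the rule $(\alpha^h,\alpha^k)^g=(\alpha^{hh_1},\alpha^{kk_1})$ for $h\in H$, $k\in K$ and $g=h_1k_1$ with $h_1\in H$, $k_1\in K$, and the action of $G$ on $\Omega$ is equivalent to this action of $G$ on $\Omega_1\times\Omega_2$.
   Context: Permutations act on the right; $\alpha^X$ denotes the orbit of $\alpha$ under $X$. Two actions of $G$ on sets $\Omega$ and $\Delta$ are equivalent if there is a bijection $\lambda:\Omega\to\Delta$ with $\lambda(\beta^x)=\lambda(\beta)^x$ for all $\beta\in\Omega$, $x\in G$. *)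

From mathcomp Require Import all_boot all_fingroup.
Set Implicit Arguments. Unset Strict Implicit. Unset Printing Implicit Defensive.

From mathcomp Require Import all_boot all_fingroup pgroup cyclic.
Set Implicit Arguments.
Unset Strict Implicit.
Unset Printing Implicit Defensive.
Import GroupScope.

(* Since H and K commute elementwise and have coprime orders, an element hk
   of H x K fixes alpha only if h and k both do: h is the \pi(#[h])-part of
   hk, hence lies in the cyclic group generated by hk.  Consequently
   alpha^(hk) determines the pair (alpha^h, alpha^k), and by transitivity
   every point is of the form alpha^(hk); the map alpha^(hk) |-> (alpha^h,
   alpha^k) is therefore a well-defined G-equivariant bijection onto
   alpha^H x alpha^K. *)

Lemma commute_coprime_groupMl (gT : finGroupType) (G : {group gT}) x y :
  commute x y -> coprime #[x] #[y] -> x * y \in G -> x \in G.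
Proof.
move=> cxy coxy xyG; set pi := \pi(#[x]).
have -> : x = (x * y).`_pi.
  rewrite consttM // (constt_p_elt (pnat_pi (order_gt0 x))).
  have /constt1P -> : pi^'.-elt y by rewrite /p_elt -coprime_pi' ?order_gt0.
  by rewrite mulg1.
have cycG : <[x * y]> \subset G by rewrite cycle_subG.
exact: (subsetP cycG _ (cycle_constt pi (x * y))).
Qed.

Lemma dprod_mulg_inj (gT : finGroupType) (A B G : {group gT}) a a' b b' :
    A \x B = G -> a \in A -> a' \in A -> b \in B -> b' \in B ->
  a * b = a' * b' -> a = a' /\ b = b'.
Proof.
move=> defG aA a'A bB b'B eq_ab.
have abG : a * b \in G by rewrite -(dprodW defG) mem_mulg.
have [y [z [_ _ _ uniqG]]] := mem_dprod defG abG.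
have [-> ->] := uniqG _ _ aA bB erefl.
by have [-> ->] := uniqG _ _ a'A b'B eq_ab.
Qed.

Section CoprimeDirectProductAction.

Variables (gT : finGroupType) (T : finType) (to : {action gT &-> T}).
Variables (H K G : {group gT}) (alpha : T).
Hypotheses (defG : H \x K = G) (coHK : coprime #|H| #|K|).

Let commuteHK h k : h \in H -> k \in K -> commute h k.
Proof.
have [_ _ cHK _] := dprodP defG.
by move=> hH kK; apply/esym/(centsP cHK).
Qed.

Let coprime_orderHK h k : h \in H -> k \in K -> coprime #[h] #[k].
Proof.
move=> hH kK; apply: coprime_dvdl (order_dvdG hH) _.
exact: coprime_dvdr (order_dvdG kK) coHK.
Qed.

Lemma astab1_dprod h k : h \in H -> k \in K ->
  h * k \in 'C[alpha | to] -> h \in 'C[alpha | to] /\ k \in 'C[alpha | to].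
Proof.
move=> hH kK hk_fix; have chk := commuteHK hH kK.
split; first exact: commute_coprime_groupMl chk (coprime_orderHK hH kK) hk_fix.
apply: commute_coprime_groupMl (esym chk) _ _; last by rewrite -chk.
by rewrite coprime_sym coprime_orderHK.
Qed.

Lemma act_dprod_eq h h' k k' : h \in H -> h' \in H -> k \in K -> k' \in K ->
  to alpha (h * k) = to alpha (h' * k') <->
  to alpha h = to alpha h' /\ to alpha k = to alpha k'.
Proof.
move=> hH h'H kK k'K.
have act_eq x x' : reflect (to alpha x = to alpha x') (x * x'^-1 \in 'C[alpha | to]).
  apply: (iffP astab1P) => [fix_xx' | eq_xx']; last by rewrite actM eq_xx' actK.
  by rewrite -[x](mulgKV x') actM fix_xx'.
have hh'H : h * h'^-1 \in H by rewrite groupM ?groupV.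
have kk'K : k * k'^-1 \in K by rewrite groupM ?groupV.
have splitM : h * k * (h' * k')^-1 = (h * h'^-1) * (k * k'^-1).
  by rewrite invMg mulgA -(mulgA h k) -(mulgA h) -(commuteHK (groupVr h'H) kk'K) mulgA.
split=> [/act_eq | [/act_eq fix_h /act_eq fix_k]]; last by apply/act_eq; rewrite splitM groupM.
by rewrite splitM => /(astab1_dprod hh'H kk'K)[/act_eq-> /act_eq->].
Qed.

(* On points outside alpha^G the value (alpha, alpha) is junk. *)
Definition dprod_coord (b : T) : T * T :=
  if [pick hk : gT * gT | [&& hk.1 \in H, hk.2 \in K & to alpha (hk.1 * hk.2) == b]]
  is Some hk then (to alpha hk.1, to alpha hk.2) else (alpha, alpha).

Lemma dprod_coordE h k : h \in H -> k \in K ->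
  dprod_coord (to alpha (h * k)) = (to alpha h, to alpha k).
Proof.
move=> hH kK; rewrite /dprod_coord; case: pickP => [[h' k'] | no_pair] /=.
  case/and3P=> h'H k'K /eqP/(act_dprod_eq h'H hH k'K kK).
  by case=> -> ->.
by have := no_pair (h, k); rewrite /= hH kK eqxx.
Qed.

Hypothesis trG : [transitive G, on [set: T] | to].

Lemma act_dprod_onto b : exists2 h, h \in H & exists2 k, k \in K & b = to alpha (h * k).
Proof.
have [g] := atransP2 trG (in_setT alpha) (in_setT b).
rewrite -(dprodW defG).
by case/mulsgP=> h k hH kK -> ->; exists h => //; exists k.
Qed.

Lemma dprod_coord_inj : injective dprod_coord.
Proof.
move=> b1 b2.
have [h1 h1H [k1 k1K ->]] := act_dprod_onto b1.
have [h2 h2H [k2 k2K ->]] := act_dprod_onto b2.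
by rewrite !dprod_coordE // => -[eq_h eq_k]; apply/act_dprod_eq.
Qed.

Lemma dprod_coord_in_orbits b :
  dprod_coord b \in setX (orbit to H alpha) (orbit to K alpha).
Proof.
have [h hH [k kK ->]] := act_dprod_onto b.
by rewrite dprod_coordE // inE !mem_orbit.
Qed.

Lemma dprod_coord_onto p : p \in setX (orbit to H alpha) (orbit to K alpha) ->
  exists b, dprod_coord b = p.
Proof.
case: p => p1 p2; rewrite inE /= => /andP[/orbitP[h hH <-] /orbitP[k kK <-]].
by exists (to alpha (h * k)); rewrite dprod_coordE.
Qed.

Lemma dprod_coordJ b h k h1 k1 : h \in H -> k \in K -> h1 \in H -> k1 \in K ->
  dprod_coord b = (to alpha h, to alpha k) ->
  dprod_coord (to b (h1 * k1)) = (to alpha (h * h1), to alpha (k * k1)).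
Proof.
move=> hH kK h1H k1K; have [h' h'H [k' k'K ->]] := act_dprod_onto b.
rewrite dprod_coordE // => -[eq_h eq_k].
have -> : to alpha (h' * k') = to alpha (h * k) by apply/act_dprod_eq.
rewrite -actM; have -> : h * k * (h1 * k1) = (h * h1) * (k * k1).
  by rewrite -!mulgA (mulgA k) -(commuteHK h1H kK) !mulgA.
by rewrite dprod_coordE ?groupM.
Qed.

End CoprimeDirectProductAction.

Theorem mainTheorem14 (T : finType) (G H K : {group {perm T}}) (alpha : T) :
  H \x K = G ->
  coprime #|H| #|K| ->
  [transitive G, on [set: T] | 'P] ->
  (forall h h' k k' h1 h1' k1 k1',
      h \in H -> h' \in H -> k \in K -> k' \in K ->
      h1 \in H -> h1' \in H -> k1 \in K -> k1' \in K ->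
      (h alpha, k alpha) = (h' alpha, k' alpha) ->
      h1 * k1 = h1' * k1' ->
      ((h * h1) alpha, (k * k1) alpha) = ((h' * h1') alpha, (k' * k1') alpha))
  /\
  (forall h k h1 k1, h \in H -> k \in K -> h1 \in H -> k1 \in K ->
      h1 * k1 \in G /\
      ((h * h1) alpha \in orbit 'P H alpha) /\ ((k * k1) alpha \in orbit 'P K alpha))
  /\
  exists lam : T -> T * T,
    [/\ injective lam,
        (forall b, lam b \in setX (orbit 'P H alpha) (orbit 'P K alpha)),
        (forall p, p \in setX (orbit 'P H alpha) (orbit 'P K alpha) ->
           exists b, lam b = p) &
        (forall b h k h1 k1, h \in H -> k \in K -> h1 \in H -> k1 \in K ->
           lam b = (h alpha, k alpha) ->
           lam ((h1 * k1) b) = ((h * h1) alpha, (k * k1) alpha))].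
Proof.
move=> defG coHK trG; split.
  move=> h h' k k' h1 h1' k1 k1' _ _ _ _ h1H h1'H k1K k1'K [eq_h eq_k].
  case/(dprod_mulg_inj defG h1H h1'H k1K k1'K) => -> ->.
  by rewrite !permM eq_h eq_k.
split=> [h k h1 k1 hH kK h1H k1K | ].
  by rewrite -(dprodW defG) mem_mulg // !(mem_orbit 'P) ?groupM.
exists (dprod_coord 'P%act H K alpha); split.
- exact: dprod_coord_inj defG coHK trG.
- exact: dprod_coord_in_orbits defG coHK trG.
- exact: dprod_coord_onto defG coHK.
- exact: dprod_coordJ defG coHK trG.
Qed.
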